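(* Let $F_0$ and $F_s$ be distribution functions, $U_r(t):=F_r^{\leftarrow}(1-1/t)=\bigl(1/(1-F_r)\bigr)^{\leftarrow}(t)$ for $t>1$, $r\in\{0,s\}$, and let $c\in\mathbb{R}$, $s\ge0$. Suppose $F_0$ is in the max-domain of attraction of $G_\gamma(x)=\exp\{-(1+\gamma x)^{-1/\gamma}\}$ for some $\gamma\in\mathbb{R}$, with a positive function $a_0$ such that $\lim_{t\to\infty}\frac{U_0(tx)-U_0(t)}{a_0(t)}=\frac{x^\gamma-1}{\gamma}$ for all $x>0$. Let $x^*:=\sup\{x:F_0(x)<1\}$. Then $$\lim_{x\uparrow x^*}\frac{1-F_s(x)}{1-F_0(x)}=e^{cs}\quad\Longleftrightarrow\quad\lim_{t\to\infty}\frac{U_s(t)-U_0(t)}{a_0(t)}=\frac{e^{c\gamma s}-1}{\gamma}.$$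
   Context: $F^{\leftarrow}$ denotes the generalized (left-continuous) inverse. For $\gamma=0$, $\frac{x^\gamma-1}{\gamma}$ means $\log x$, $(1+\gamma x)^{-1/\gamma}$ means $e^{-x}$, and $\frac{e^{c\gamma s}-1}{\gamma}$ means $cs$. *)

From Stdlib Require Import Reals.
From Coquelicot Require Import Coquelicot.
Open Scope R_scope.

Definition is_distribution_function (F : R -> R) : Prop :=
  (forall x y, x <= y -> F x <= F y) /\
  (forall x, filterlim F (at_right x) (locally (F x))) /\
  filterlim F (Rbar_locally m_infty) (locally 0) /\
  filterlim F (Rbar_locally p_infty) (locally 1).

Definition gen_inv (F : R -> R) (p : R) : Rbar :=
  Glb_Rbar (fun x => p <= F x).

(* U(t) = F^{<-}(1 - 1/t), meaningful (finite) for t > 1. *)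
Definition Uq (F : R -> R) (t : R) : R := real (gen_inv F (1 - / t)).

Definition hpow (gamma x : R) : R :=
  if Req_EM_T gamma 0 then ln x else (Rpower x gamma - 1) / gamma.

Definition hexp (gamma c s : R) : R :=
  if Req_EM_T gamma 0 then c * s else (exp (c * gamma * s) - 1) / gamma.

Definition GEV (gamma x : R) : R :=
  if Req_EM_T gamma 0 then exp (- exp (- x))
  else if Rlt_dec 0 (1 + gamma * x) then
    exp (- Rpower (1 + gamma * x) (- / gamma))
  else if Rlt_dec 0 gamma then 0 else 1.

(* Max-domain of attraction: F^n(a_n x + b_n) -> G_gamma(x) for all x
   (G_gamma is continuous, so every x is a continuity point). *)
Definition in_MDA (F : R -> R) (gamma : R) : Prop :=
  exists (a b : nat -> R), (forall n, 0 < a n) /\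
    forall x, is_lim_seq (fun n => (F (a n * x + b n)) ^ n) (GEV gamma x).

Definition right_endpoint (F : R -> R) : Rbar := Lub_Rbar (fun x => F x < 1).

(* Left-approach filter x ↑ x^* for x^* in Rbar (for x^* = +oo: x -> +oo). *)
Definition Rbar_at_left (x : Rbar) : (R -> Prop) -> Prop :=
  within (fun u => Rbar_lt u x) (Rbar_locally x).

(* Write lam = e^{cs}. Both conditions are equivalent to U_s(t) being squeezed
   between U_0(k1 t) and U_0(k2 t) eventually, for all 0 < k1 < lam < k2.
   For the tail ratio this follows from the Galois inequality
   U(t) <= y <-> F(y) >= 1 - 1/t, which converts bounds
   k1 (1 - F_0) <= 1 - F_s <= k2 (1 - F_0) near x^* into bounds on quantiles and
   back.  For the normalised difference it follows from
   (U_0(tk) - U_0(t))/a_0(t) -> h(k), where h(x) = (x^gamma - 1)/gamma is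
   continuous and strictly increasing, so that h(k1) < h(lam) < h(k2) and
   h(k_i) -> h(lam).  The same limit at k = 2 shows that U_0 keeps increasing,
   hence F_0 has no atom at x^*, which makes 1/(1 - F_0(u)) -> oo as u -> x^*. *)

From Stdlib Require Import Reals Lra.
From Coquelicot Require Import Coquelicot.
Open Scope R_scope.

Lemma filterlim_locally_between {T : Type} {F : (T -> Prop) -> Prop} {FF : Filter F}
    (f : T -> R) (l : R) :
  filterlim f F (locally l) <->
  forall lo hi, lo < l -> l < hi -> F (fun x => lo < f x < hi).
Proof.
  split.
  - intros Hf lo hi Hlo Hhi.
    assert (Hd : 0 < Rmin (l - lo) (hi - l)) by (apply Rmin_pos; lra).
    apply (filter_imp (fun x => ball l (mkposreal _ Hd) (f x))).
    + intros x Hx. change (Rabs (f x - l) < Rmin (l - lo) (hi - l)) in Hx.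
      apply Rabs_def2 in Hx.
      pose proof (Rmin_l (l - lo) (hi - l)). pose proof (Rmin_r (l - lo) (hi - l)). lra.
    + exact (proj1 (filterlim_locally f l) Hf _).
  - intros Hbetween. apply filterlim_locally. intros [eps Heps].
    apply (filter_imp (fun x => l - eps < f x < l + eps)).
    + intros x Hx. change (Rabs (f x - l) < eps). apply Rabs_def1; lra.
    + apply Hbetween; lra.
Qed.

Lemma eventually_gt (c : R) : Rbar_locally p_infty (fun t => c < t).
Proof. exists c. tauto. Qed.

Lemma eventually_scale (P : R -> Prop) (k : R) : 0 < k ->
  Rbar_locally p_infty P -> Rbar_locally p_infty (fun t => P (t * k)).
Proof.
  intros Hk [M HM]. exists (M / k). intros t Ht. apply HM.
  apply Rlt_div_l in Ht; [exact Ht|exact Hk].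
Qed.

Lemma inv_lt_1 (t : R) : 1 < t -> 0 < / t < 1.
Proof.
  intros Ht. split; [apply Rinv_0_lt_compat; lra|].
  rewrite <- Rinv_1. apply Rinv_lt_contravar; lra.
Qed.

Section DistributionFunction.
Variable F : R -> R.
Hypothesis HF : is_distribution_function F.

Lemma df_exists_lt_1 : exists b, F b < 1.
Proof.
  pose proof HF as [_ [_ [Hminf _]]].
  destruct (proj1 (filterlim_locally_between F 0) Hminf (-1) (1/2)) as [M HM]; try lra.
  exists (M - 1). pose proof (HM (M - 1)). lra.
Qed.

Lemma df_lt_right (x p : R) : F x < p -> exists y, x < y /\ F y < p.
Proof.
  intros Hx. pose proof HF as [_ [Hright _]].
  destruct (proj1 (filterlim_locally_between F (F x)) (Hright x) (F x - 1) p)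
    as [[d Hd] Hball]; try lra.
  exists (x + d / 2). split; [lra|].
  apply Hball; [|lra]. change (Rabs (x + d / 2 - x) < d). rewrite Rabs_right; lra.
Qed.

Lemma gen_inv_le_iff (p y : R) : 0 < p < 1 ->
  real (gen_inv F p) <= y <-> p <= F y.
Proof.
  intros [Hp0 Hp1]. pose proof HF as [Hmono [_ [Hminf Hpinf]]].
  destruct (proj1 (filterlim_locally_between F 1) Hpinf p 2) as [M1 HM1]; try lra.
  destruct (proj1 (filterlim_locally_between F 0) Hminf (-1) p) as [M2 HM2]; try lra.
  unfold gen_inv.
  destruct (Glb_Rbar_correct (fun x => p <= F x)) as [Hlb Hglb].
  assert (Hup : Rbar_le (Glb_Rbar (fun x => p <= F x)) (M1 + 1)).
  { apply Hlb. apply Rlt_le, HM1. lra. }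
  assert (Hlow : Rbar_le M2 (Glb_Rbar (fun x => p <= F x))).
  { apply Hglb. intros x Hx. simpl.
    destruct (Rle_lt_dec M2 x) as [h|h]; [exact h|]. specialize (HM2 x h). lra. }
  destruct (Glb_Rbar (fun x => p <= F x)) as [q| |]; simpl in Hup, Hlow; try contradiction.
  simpl. split.
  - intros Hqy. destruct (Rle_lt_dec p (F y)) as [h|h]; [exact h|exfalso].
    destruct (df_lt_right y p h) as [y' [Hyy' Hy']].
    assert (Hy'q : Rbar_le y' q).
    { apply Hglb. intros z Hz. simpl.
      destruct (Rle_lt_dec y' z) as [h'|h']; [exact h'|].
      pose proof (Hmono z y' (Rlt_le _ _ h')). lra. }
    simpl in Hy'q. lra.
  - intros Hy. exact (Hlb y Hy).
Qed.

Lemma Uq_le_iff (t y : R) : 1 < t -> Uq F t <= y <-> 1 - / t <= F y.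
Proof. intros Ht. apply gen_inv_le_iff. pose proof (inv_lt_1 t Ht). lra. Qed.

Lemma lt_Uq_iff (t y : R) : 1 < t -> y < Uq F t <-> F y < 1 - / t.
Proof.
  intros Ht. pose proof (Uq_le_iff t y Ht) as Hiff. split; intros Hy.
  - destruct (Rlt_le_dec (F y) (1 - / t)) as [h|h]; [exact h|]. apply Hiff in h. lra.
  - destruct (Rlt_le_dec y (Uq F t)) as [h|h]; [exact h|]. apply Hiff in h. lra.
Qed.

Lemma lt_right_endpoint_iff (u : R) : Rbar_lt u (right_endpoint F) <-> F u < 1.
Proof.
  pose proof HF as [Hmono _].
  destruct (Lub_Rbar_correct (fun x => F x < 1)) as [Hub Hlub].
  unfold right_endpoint. split.
  - intros Hlt. destruct (Rlt_le_dec (F u) 1) as [h|h]; [exact h|exfalso].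
    assert (Hle : Rbar_le (Lub_Rbar (fun x => F x < 1)) u).
    { apply Hlub. intros x Hx. simpl.
      destruct (Rle_lt_dec x u) as [h'|h']; [exact h'|].
      pose proof (Hmono u x (Rlt_le _ _ h')). lra. }
    destruct (Lub_Rbar (fun x => F x < 1)); simpl in *; try contradiction; lra.
  - intros Hu. destruct (df_lt_right u 1 Hu) as [y [Huy Hy]].
    pose proof (Hub y Hy) as Hle.
    destruct (Lub_Rbar (fun x => F x < 1)); simpl in *; try contradiction; lra.
Qed.

Lemma at_left_right_endpoint_iff (P : R -> Prop) :
  Rbar_at_left (right_endpoint F) P <->
  exists b, F b < 1 /\ forall u, b < u -> F u < 1 -> P u.
Proof.
  pose proof lt_right_endpoint_iff as Hlt.
  destruct df_exists_lt_1 as [b0 Hb0].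
  revert Hlt. unfold Rbar_at_left, within.
  destruct (right_endpoint F) as [x| |]; intros Hlt; simpl; split.
  - intros [[d Hd] HP]. exists (x - d). split; [apply Hlt; simpl; lra|].
    intros u Hbu Hu. assert (Hux : u < x) by exact (proj2 (Hlt u) Hu).
    apply HP; [|exact (proj2 (Hlt u) Hu)].
    change (Rabs (u - x) < d). rewrite Rabs_left; lra.
  - intros [b [Hb HP]]. assert (Hbx : b < x) by exact (proj2 (Hlt b) Hb).
    exists (mkposreal (x - b) ltac:(lra)). intros y Hy Hyx.
    change (Rabs (y - x) < x - b) in Hy. apply Rabs_def2 in Hy.
    apply HP; [lra|apply Hlt, Hyx].
  - intros [M HM]. exists M. split; [apply Hlt; exact I|].
    intros u Hu _. apply HM; [exact Hu|exact I].
  - intros [b [Hb HP]]. exists b. intros y Hy _. apply HP; [exact Hy|apply Hlt; exact I].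
  - intros _. destruct (proj2 (Hlt b0) Hb0).
  - intros _. destruct (proj2 (Hlt b0) Hb0).
Qed.

Lemma eventually_lt_Uq (b : R) : F b < 1 -> Rbar_locally p_infty (fun t => b < Uq F t).
Proof.
  intros Hb. exists (Rmax 1 (/ (1 - F b))). intros t Ht.
  pose proof (Rmax_l 1 (/ (1 - F b))). pose proof (Rmax_r 1 (/ (1 - F b))).
  apply lt_Uq_iff; [lra|].
  assert (Hinv : / t < / / (1 - F b)).
  { apply Rinv_lt_contravar; [|lra].
    apply Rmult_lt_0_compat; [apply Rinv_0_lt_compat|]; lra. }
  rewrite Rinv_inv in Hinv. lra.
Qed.

Lemma eventually_F_Uq_lt_1 :
  Rbar_locally p_infty (fun t => Uq F t < Uq F (t * 2)) ->
  Rbar_locally p_infty (fun t => F (Uq F t) < 1).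
Proof.
  intros Hincr. apply (filter_imp (fun t => 1 < t /\ Uq F t < Uq F (t * 2))).
  - intros t [Ht Hlt]. apply lt_Uq_iff in Hlt; [|lra].
    pose proof (inv_lt_1 (t * 2)). lra.
  - apply filter_and; [apply eventually_gt|exact Hincr].
Qed.

End DistributionFunction.

(* [V t] behaves like [U (lam * t)], up to arbitrarily small relative errors in the argument. *)
Definition sandwiched (U V : R -> R) (lam : R) : Prop :=
  forall k1 k2, 0 < k1 -> k1 < lam -> lam < k2 ->
    Rbar_locally p_infty (fun t => U (t * k1) <= V t <= U (t * k2)).

Section TailQuantiles.
Variables F0 Fs : R -> R.
Hypotheses (HF0 : is_distribution_function F0) (HFs : is_distribution_function Fs).

Lemma Uq_le_of_tail_le (t k : R) : 1 < t -> 0 < k -> 1 < t * k ->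
  1 - Fs (Uq F0 (t * k)) <= k * (1 - F0 (Uq F0 (t * k))) ->
  Uq Fs t <= Uq F0 (t * k).
Proof.
  intros Ht Hk Htk Htail. set (y := Uq F0 (t * k)) in *.
  apply Uq_le_iff; [exact HFs|exact Ht|].
  assert (Hy : 1 - / (t * k) <= F0 y) by (apply Uq_le_iff; [exact HF0|exact Htk|apply Rle_refl]).
  assert (Hky : k * (1 - F0 y) <= k * / (t * k)) by (apply Rmult_le_compat_l; lra).
  replace (k * / (t * k)) with (/ t) in Hky by (field; lra).
  lra.
Qed.

Lemma le_Uq_of_tail_ge (t k b : R) : 1 < t -> 0 < k -> 1 < t * k ->
  b < Uq F0 (t * k) ->
  (forall z, b < z -> z < Uq F0 (t * k) -> k * (1 - F0 z) <= 1 - Fs z) ->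
  Uq F0 (t * k) <= Uq Fs t.
Proof.
  intros Ht Hk Htk Hb Htail.
  destruct (Rle_lt_dec (Uq F0 (t * k)) (Uq Fs t)) as [h|h]; [exact h|exfalso].
  set (z := Rmax (Uq Fs t) ((b + Uq F0 (t * k)) / 2)).
  assert (Hz1 : Uq Fs t <= z) by apply Rmax_l.
  assert (Hz2 : (b + Uq F0 (t * k)) / 2 <= z) by apply Rmax_r.
  assert (Hz3 : z < Uq F0 (t * k)) by (apply Rmax_lub_lt; lra).
  assert (HFsz : 1 - / t <= Fs z) by (apply Uq_le_iff; assumption).
  assert (HF0z : F0 z < 1 - / (t * k)) by (apply lt_Uq_iff; assumption).
  assert (Hkz : k * / (t * k) < k * (1 - F0 z)) by (apply Rmult_lt_compat_l; lra).
  replace (k * / (t * k)) with (/ t) in Hkz by (field; lra).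
  specialize (Htail z ltac:(lra) Hz3). lra.
Qed.

Lemma tail_le_of_Uq_le (u t k : R) : 1 < t -> 0 < k -> 1 < t * k ->
  1 - F0 u = / (t * k) -> Uq Fs t <= Uq F0 (t * k) ->
  1 - Fs u <= k * (1 - F0 u).
Proof.
  intros Ht Hk Htk Hu Hle.
  assert (Hu0 : Uq F0 (t * k) <= u) by (apply Uq_le_iff; [exact HF0|exact Htk|lra]).
  assert (HFsu : 1 - / t <= Fs u) by (apply Uq_le_iff; [exact HFs|exact Ht|lra]).
  rewrite Hu. replace (k * / (t * k)) with (/ t) by (field; lra). lra.
Qed.

Lemma tail_gt_of_le_Uq (u t k k1 : R) : 1 < t -> 0 < k -> k < k1 -> 1 < t * k ->
  1 - F0 u = / (t * k) -> Uq F0 (t * k1) <= Uq Fs t ->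
  k * (1 - F0 u) < 1 - Fs u.
Proof.
  intros Ht Hk Hkk1 Htk Hu Hle.
  assert (Htk1 : t * k < t * k1) by (apply Rmult_lt_compat_l; lra).
  assert (Hinv : / (t * k1) < / (t * k)) by (apply Rinv_lt_contravar; nra).
  assert (Hu0 : u < Uq F0 (t * k1)) by (apply lt_Uq_iff; [exact HF0|lra|lra]).
  assert (HFsu : Fs u < 1 - / t) by (apply lt_Uq_iff; [exact HFs|exact Ht|lra]).
  rewrite Hu. replace (k * / (t * k)) with (/ t) by (field; lra). lra.
Qed.

(* In effect: [F0] does not jump to [1] at its right endpoint. *)
Hypothesis Hno_atom : Rbar_locally p_infty (fun t => F0 (Uq F0 t) < 1).

Lemma at_left_tail_inv (P : R -> Prop) : Rbar_locally p_infty P ->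
  Rbar_at_left (right_endpoint F0) (fun u => F0 u < 1 /\ P (/ (1 - F0 u))).
Proof.
  intros [M HM]. pose proof Hno_atom as [M' HM'].
  set (K := Rmax 1 (Rmax M M') + 1).
  pose proof (Rmax_l 1 (Rmax M M')). pose proof (Rmax_r 1 (Rmax M M')).
  pose proof (Rmax_l M M'). pose proof (Rmax_r M M').
  apply at_left_right_endpoint_iff; [exact HF0|].
  exists (Uq F0 K). split; [apply HM'; unfold K; lra|].
  intros u Hu Hu1. split; [exact Hu1|]. apply HM.
  assert (HFu : 1 - / K <= F0 u) by (apply Uq_le_iff; [exact HF0|unfold K; lra|lra]).
  assert (Hinv : / / K <= / (1 - F0 u)) by (apply Rinv_le_contravar; lra).
  rewrite Rinv_inv in Hinv. unfold K in Hinv. lra.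
Qed.

Lemma sandwiched_of_tail_ratio (lam : R) :
  filterlim (fun u => (1 - Fs u) / (1 - F0 u)) (Rbar_at_left (right_endpoint F0))
    (locally lam) ->
  sandwiched (Uq F0) (Uq Fs) lam.
Proof.
  intros Hlim k1 k2 Hk1 Hk1l Hk2.
  destruct (proj1 (at_left_right_endpoint_iff F0 HF0 _)
              (proj1 (filterlim_locally_between _ lam) Hlim k1 k2 Hk1l Hk2))
    as [b [Hb Hratio]].
  assert (Hk2pos : 0 < k2) by lra.
  assert (Htail : forall z, b < z -> F0 z < 1 ->
            k1 * (1 - F0 z) < 1 - Fs z < k2 * (1 - F0 z)).
  { intros z Hbz Hz. destruct (Hratio z Hbz Hz) as [Hlo Hhi].
    split; [apply (Rlt_div_r _ _ (1 - F0 z))|apply (Rlt_div_l _ _ (1 - F0 z))]; lra. }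
  apply (filter_imp (fun t => (1 < t /\ 1 < t * k1) /\
                              (b < Uq F0 (t * k1) /\ b < Uq F0 (t * k2)) /\
                              F0 (Uq F0 (t * k2)) < 1)).
  - intros t [[Ht Htk1] [[Hb1 Hb2] Hna]].
    assert (Htk2 : 1 < t * k2) by nra.
    split.
    + apply (le_Uq_of_tail_ge t k1 b); try assumption.
      intros z Hbz Hz.
      apply (lt_Uq_iff F0 HF0 _ _ Htk1) in Hz. pose proof (inv_lt_1 (t * k1) Htk1).
      apply Rlt_le, (Htail z Hbz ltac:(lra)).
    + apply Uq_le_of_tail_le; try assumption.
      apply Rlt_le, (Htail _ Hb2 Hna).
  - repeat apply filter_and.
    + apply eventually_gt.
    + apply (eventually_scale (fun t => 1 < t)); [exact Hk1|apply eventually_gt].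
    + apply (eventually_scale (fun t => b < Uq F0 t)); [exact Hk1|].
      apply eventually_lt_Uq; assumption.
    + apply (eventually_scale (fun t => b < Uq F0 t)); [exact Hk2pos|].
      apply eventually_lt_Uq; assumption.
    + apply (eventually_scale (fun t => F0 (Uq F0 t) < 1)); [exact Hk2pos|exact Hno_atom].
Qed.

Lemma tail_ratio_of_sandwiched (lam : R) : 0 < lam ->
  sandwiched (Uq F0) (Uq Fs) lam ->
  filterlim (fun u => (1 - Fs u) / (1 - F0 u)) (Rbar_at_left (right_endpoint F0))
    (locally lam).
Proof.
  intros Hlam Hsw. apply filterlim_locally_between. intros lo hi Hlo Hhi.
  pose proof (Rmax_l lo (lam / 2)). pose proof (Rmax_r lo (lam / 2)).
  set (k := Rmax lo (lam / 2)) in *. set (k1 := (k + lam) / 2). set (k2 := (lam + hi) / 2).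
  assert (Hklam : k < lam) by (apply Rmax_lub_lt; lra).
  assert (Hk : 0 < k) by lra.
  assert (Hk2 : 0 < k2) by (unfold k2; lra).
  pose proof (Hsw k1 k2 ltac:(unfold k1; lra) ltac:(unfold k1; lra) ltac:(unfold k2; lra))
    as Hs.
  set (P := fun tau => 1 < tau /\
     (1 < tau * / k /\ Uq F0 (tau * / k * k1) <= Uq Fs (tau * / k)) /\
     (1 < tau * / k2 /\ Uq Fs (tau * / k2) <= Uq F0 (tau * / k2 * k2))).
  assert (HP : Rbar_locally p_infty P).
  { unfold P. apply filter_and; [apply eventually_gt|apply filter_and].
    - apply (eventually_scale (fun t => 1 < t /\ Uq F0 (t * k1) <= Uq Fs t));
        [apply Rinv_0_lt_compat, Hk|].
      apply filter_and; [apply eventually_gt|].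
      apply (filter_imp _ _ (fun t Ht => proj1 Ht) Hs).
    - apply (eventually_scale (fun t => 1 < t /\ Uq Fs t <= Uq F0 (t * k2)));
        [apply Rinv_0_lt_compat, Hk2|].
      apply filter_and; [apply eventually_gt|].
      apply (filter_imp _ _ (fun t Ht => proj2 Ht) Hs). }
  apply (filter_imp (fun u => F0 u < 1 /\ P (/ (1 - F0 u)))); [|exact (at_left_tail_inv P HP)].
  intros u [Hu1 HPu]. unfold P in HPu.
  destruct HPu as [Htau [[Htk Hlow] [Htk2 Hup]]].
  assert (Hp : 0 < 1 - F0 u) by lra.
  assert (Hscale : forall c, 0 < c -> / (1 - F0 u) * / c * c = / (1 - F0 u))
    by (intros c Hc; field; lra).
  assert (Hinv : forall c, 0 < c -> 1 - F0 u = / (/ (1 - F0 u) * / c * c))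
    by (intros c Hc; rewrite Hscale by exact Hc; rewrite Rinv_inv; reflexivity).
  rewrite Hscale in Hup by exact Hk2.
  pose proof (tail_gt_of_le_Uq u _ k k1 Htk Hk ltac:(unfold k1; lra)
                ltac:(rewrite Hscale; lra) (Hinv k Hk) Hlow) as Hlower.
  assert (Hupper : 1 - Fs u <= k2 * (1 - F0 u)).
  { apply (tail_le_of_Uq_le u _ k2 Htk2 Hk2); [rewrite Hscale; lra|exact (Hinv k2 Hk2)|].
    rewrite Hscale by exact Hk2. exact Hup. }
  split.
  - apply (Rlt_div_r _ _ (1 - F0 u)); nra.
  - apply (Rle_lt_trans _ k2); [apply (Rle_div_l _ _ (1 - F0 u)); lra|unfold k2; lra].
Qed.

End TailQuantiles.

Section NormalizedIncrements.
Variables (U V a h : R -> R) (lam : R).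
Hypothesis Ha : forall t, 0 < a t.
Hypothesis HU : forall k, 0 < k ->
  filterlim (fun t => (U (t * k) - U t) / a t) (Rbar_locally p_infty) (locally (h k)).

Lemma eventually_lt_scaled (k : R) : 0 < k -> 0 < h k ->
  Rbar_locally p_infty (fun t => U t < U (t * k)).
Proof.
  intros Hk Hhk.
  apply (filter_imp (fun t => 0 < (U (t * k) - U t) / a t < h k + 1)).
  - intros t [Hpos _]. pose proof (Ha t).
    apply (Rlt_div_r _ _ (a t)) in Hpos; [lra|lra].
  - apply (proj1 (filterlim_locally_between _ _) (HU k Hk)); lra.
Qed.

Lemma lim_of_sandwiched : 0 < lam -> continuous h lam -> sandwiched U V lam ->
  filterlim (fun t => (V t - U t) / a t) (Rbar_locally p_infty) (locally (h lam)).
Proof.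
  intros Hlam Hcont Hsw. apply filterlim_locally_between. intros lo hi Hlo Hhi.
  destruct (proj1 (filterlim_locally_between _ _) Hcont lo hi Hlo Hhi) as [d Hball].
  pose proof (cond_pos d). pose proof (Rmin_l d lam). pose proof (Rmin_r d lam).
  pose proof (Rmin_pos d lam (cond_pos d) Hlam).
  set (k1 := lam - Rmin d lam / 2). set (k2 := lam + d / 2).
  assert (Hk1 : lo < h k1 < hi).
  { apply Hball. change (Rabs (k1 - lam) < d). unfold k1. rewrite Rabs_left; lra. }
  assert (Hk2 : lo < h k2 < hi).
  { apply Hball. change (Rabs (k2 - lam) < d). unfold k2. rewrite Rabs_right; lra. }
  apply (filter_imp (fun t => (lo < (U (t * k1) - U t) / a t < hi /\
                               lo < (U (t * k2) - U t) / a t < hi) /\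
                              U (t * k1) <= V t <= U (t * k2))).
  - intros t [[[Hlo1 _] [_ Hhi2]] [Hle1 Hle2]]. pose proof (Rinv_0_lt_compat _ (Ha t)).
    unfold Rdiv in *. split; nra.
  - assert (Hk1pos : 0 < k1) by (unfold k1; lra).
    assert (Hk2pos : 0 < k2) by (unfold k2; lra).
    apply filter_and; [apply filter_and|].
    + apply (proj1 (filterlim_locally_between _ _) (HU k1 Hk1pos)); lra.
    + apply (proj1 (filterlim_locally_between _ _) (HU k2 Hk2pos)); lra.
    + apply Hsw; unfold k1, k2; lra.
Qed.

Lemma sandwiched_of_lim : (forall x y, 0 < x -> x < y -> h x < h y) ->
  filterlim (fun t => (V t - U t) / a t) (Rbar_locally p_infty) (locally (h lam)) ->
  sandwiched U V lam.
Proof.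
  intros Hmono Hlim k1 k2 Hk1 Hk1l Hk2.
  assert (Hk2pos : 0 < k2) by lra.
  pose proof (Hmono k1 lam Hk1 Hk1l). pose proof (Hmono lam k2 ltac:(lra) Hk2).
  set (m1 := (h k1 + h lam) / 2). set (m2 := (h lam + h k2) / 2).
  apply (filter_imp (fun t => ((U (t * k1) - U t) / a t < m1 /\ m2 < (U (t * k2) - U t) / a t)
                              /\ m1 < (V t - U t) / a t < m2)).
  - intros t [[H1 H2] [H3 H4]]. pose proof (Rinv_0_lt_compat _ (Ha t)).
    unfold Rdiv in *. split; nra.
  - apply filter_and; [apply filter_and|].
    + apply (filter_imp (fun t => h k1 - 1 < (U (t * k1) - U t) / a t < m1));
        [tauto|].
      apply (proj1 (filterlim_locally_between _ _) (HU k1 Hk1)); unfold m1; lra.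
    + apply (filter_imp (fun t => m2 < (U (t * k2) - U t) / a t < h k2 + 1));
        [tauto|].
      apply (proj1 (filterlim_locally_between _ _) (HU k2 Hk2pos)); unfold m2; lra.
    + apply (proj1 (filterlim_locally_between _ _) Hlim); unfold m1, m2; lra.
Qed.

End NormalizedIncrements.

Lemma hexp_hpow (gamma c s : R) : hexp gamma c s = hpow gamma (exp (c * s)).
Proof.
  unfold hexp, hpow, Rpower. rewrite ln_exp.
  destruct (Req_EM_T gamma 0); [reflexivity|].
  replace (gamma * (c * s)) with (c * gamma * s) by ring. reflexivity.
Qed.

Lemma hpow_1 (gamma : R) : hpow gamma 1 = 0.
Proof.
  unfold hpow, Rpower. rewrite ln_1, Rmult_0_r, exp_0.
  destruct (Req_EM_T gamma 0); [reflexivity|field; assumption].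
Qed.

Lemma hpow_increasing (gamma x y : R) : 0 < x -> x < y -> hpow gamma x < hpow gamma y.
Proof.
  intros Hx Hxy. pose proof (ln_increasing x y Hx Hxy) as Hln.
  unfold hpow, Rpower. destruct (Req_EM_T gamma 0) as [_|Hg]; [exact Hln|].
  destruct (Rlt_dec 0 gamma) as [Hpos|Hneg].
  - assert (exp (gamma * ln x) < exp (gamma * ln y)) by (apply exp_increasing; nra).
    apply Rmult_lt_compat_r; [apply Rinv_0_lt_compat|]; lra.
  - assert (exp (gamma * ln y) < exp (gamma * ln x)) by (apply exp_increasing; nra).
    assert (/ gamma < 0) by (apply Rinv_lt_0_compat; lra).
    unfold Rdiv. nra.
Qed.

Lemma hpow_continuous (gamma x : R) : 0 < x -> continuous (hpow gamma) x.
Proof.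
  intros Hx. apply (@ex_derive_continuous R_AbsRing R_NormedModule).
  unfold hpow, Rpower. destruct (Req_EM_T gamma 0); auto_derive; exact Hx.
Qed.

Theorem mainTheorem4 (F0 Fs a0 : R -> R) (gamma c s : R) :
  is_distribution_function F0 ->
  is_distribution_function Fs ->
  0 <= s ->
  in_MDA F0 gamma ->
  (forall t, 0 < a0 t) ->
  (forall x, 0 < x ->
     filterlim (fun t => (Uq F0 (t * x) - Uq F0 t) / a0 t)
       (Rbar_locally p_infty) (locally (hpow gamma x))) ->
  (filterlim (fun x => (1 - Fs x) / (1 - F0 x))
      (Rbar_at_left (right_endpoint F0)) (locally (exp (c * s)))
   <->
   filterlim (fun t => (Uq Fs t - Uq F0 t) / a0 t)
      (Rbar_locally p_infty) (locally (hexp gamma c s))).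
Proof.
  intros HF0 HFs _ _ Ha HU.
  rewrite hexp_hpow.
  assert (Hlam : 0 < exp (c * s)) by apply exp_pos.
  assert (Hno_atom : Rbar_locally p_infty (fun t => F0 (Uq F0 t) < 1)).
  { apply (eventually_F_Uq_lt_1 F0 HF0).
    apply (eventually_lt_scaled (Uq F0) a0 (hpow gamma) Ha HU); [lra|].
    rewrite <- (hpow_1 gamma). apply hpow_increasing; lra. }
  transitivity (sandwiched (Uq F0) (Uq Fs) (exp (c * s))); split.
  - apply sandwiched_of_tail_ratio; assumption.
  - apply tail_ratio_of_sandwiched; assumption.
  - apply lim_of_sandwiched; [exact Ha|exact HU|exact Hlam|].
    apply hpow_continuous, Hlam.
  - apply sandwiched_of_lim; [exact Ha|exact HU|].
    intros x y Hx Hxy. apply hpow_increasing; assumption.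
Qed.
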